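(* For every $n\ge1$, $\lambda^{(0)}_{2n-1}\equiv0$, and $$\lambda^{(0)}_{2n}(t,c)=\frac{p_{2n}(\lambda_0,c)}{(4\lambda_0^3-c)^{5n-1}}$$ for some polynomial $p_{2n}\in\mathbb C[\lambda_0,c]$ whose degree in $\lambda_0$ is at most $9n-2$.
   Context: Let $\eta$ be a large parameter and $c\in\mathbb C$. The Hamiltonian system $(H_{\rm II})$: $\frac{d\lambda}{dt}=\eta\nu$, $\frac{d\nu}{dt}=\eta(2\lambda^3+t\lambda+c)$. Let $\lambda_0(t,c)$ be a branch of the algebraic function defined by $2\lambda_0^3+t\lambda_0+c=0$ (so $6\lambda_0^2+t=(4\lambda_0^3-c)/\lambda_0$). The 0-parameter solution is the unique pair of formal power series $\lambda^{(0)}=\sum_{k\ge0}\eta^{-k}\lambda^{(0)}_k(t,c)$, $\nu^{(0)}=\sum_{k\ge0}\eta^{-k}\nu^{(0)}_k(t,c)$ solving $(H_{\rm II})$ formally with $\lambda^{(0)}_0=\lambda_0$, $\nu^{(0)}_0=0$; equivalently $(6\lambda_0^2+t)\lambda^{(0)}_k+2\sum_{k_1+k_2+k_3=k,\,0\le k_j<k}\lambda^{(0)}_{k_1}\lambda^{(0)}_{k_2}\lambda^{(0)}_{k_3}=\frac{d^2\lambda^{(0)}_{k-2}}{dt^2}$ for $k\ge1$ (with $\lambda^{(0)}_{-1}=0$). *)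

From HB Require Import structures.
From mathcomp Require Import all_boot all_order all_algebra all_field.
Set Implicit Arguments. Unset Strict Implicit. Unset Printing Implicit Defensive.
Import Order.TTheory GRing.Theory Num.Theory.
Local Open Scope ring_scope.

(* Evaluation of a two-variable polynomial p(X, Y) with complex (algC)
   coefficients, represented as p : {poly {poly algC}} whose OUTER variable is X
   (so the degree in X is (size p).-1) and inner variable is Y, at a point
   (x, y) of a commutative algC-algebra R. *)
Definition eval2 (R : comUnitAlgType algC) (p : {poly {poly algC}}) (x y : R) : R :=
  (map_poly (fun q : {poly algC} => (map_poly (fun a : algC => a%:A) q).[y]) p).[x].

(* We work with an abstract derivation D = d/dt of a commutative algC-algebra
   with D t = 1 and D c = 0.  First come the Leibniz rules and the chain rule
   for polynomial expressions in (lambda_0, c); implicit differentiation of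
   2 lambda_0^3 + t lambda_0 + c = 0 gives D lambda_0 = -lambda_0^2 / Delta and
   D Delta = -12 lambda_0^4 / Delta.  Hence the class [frac_form e s] of
   quotients P(lambda_0, c) / Delta^e with deg_lambda P < s is closed under
   sums and products, D maps shape (e, s) to (e + 2, s + 4), and multiplying
   numerator and denominator by Delta maps (e, s) to (e + 1, s + 3).
   Since (6 lambda_0^2 + t) lambda_0 = Delta, the recursion reads
     lambda_k = (lambda_0 / Delta) (D^2 lambda_(k-2) - 2 sum_(i+j+m=k) lambda_i lambda_j lambda_m),
   and a strong induction on k shows that lambda_k = 0 for odd k (every cubic
   term then has an odd index) while lambda_(2a), a > 0, has shape
   (5a - 1, 9a - 1), the weight count being a linear inequality. *)

From HB Require Import structures.
From mathcomp Require Import all_boot all_order all_algebra all_field.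
From mathcomp Require Import ring zify.
Set Implicit Arguments. Unset Strict Implicit. Unset Printing Implicit Defensive.
Import Order.TTheory GRing.Theory Num.Theory.
Local Open Scope ring_scope.

Section ZeroParameterSolution.

Variables (R : comUnitAlgType algC) (D : R -> R).
Hypothesis D_add : forall x y : R, D (x + y) = D x + D y.
Hypothesis D_mul : forall x y : R, D (x * y) = D x * y + x * D y.

Lemma D0 : D 0 = 0.
Proof. by apply: (addrI (D 0)); rewrite -D_add !addr0. Qed.

Lemma D1 : D 1 = 0.
Proof. by apply: (addrI (D 1)); rewrite addr0 -{3}(mulr1 1) D_mul mulr1 mul1r. Qed.

Lemma DN x : D (- x) = - D x.
Proof. by apply/eqP; rewrite -subr_eq0 opprK -D_add addNr D0. Qed.

Lemma DB x y : D (x - y) = D x - D y.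
Proof. by rewrite D_add DN. Qed.

Lemma D_nat k : D k%:R = 0.
Proof. by elim: k => [|k IH]; rewrite ?D0 // -natr1 D_add IH D1 addr0. Qed.

Lemma D_natM k x : D (k%:R * x) = k%:R * D x.
Proof. by rewrite D_mul D_nat mul0r add0r. Qed.

Lemma D_exp x n : D (x ^+ n.+1) = n.+1%:R * x ^+ n * D x.
Proof.
elim: n => [|n IH]; first by rewrite expr1 expr0 mulr1 mul1r.
by rewrite exprS D_mul IH !exprS -!natr1; ring.
Qed.

Hypothesis D_scale : forall (a : algC) (x : R), D (a *: x) = a *: D x.
Variables (t c l0 : R).
Hypothesis Dt : D t = 1.
Hypothesis Dc : D c = 0.

Definition ev2 : {rmorphism {poly {poly algC}} -> R} :=
  horner_eval l0 \o map_poly (horner_alg c).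

Lemma eval2_ev2 p : eval2 p l0 c = ev2 p.
Proof. by rewrite /eval2 /=; congr (_.[_]); apply: eq_map_poly. Qed.

Lemma ev2X : ev2 'X = l0.
Proof. by rewrite /= map_polyX /horner_eval hornerX. Qed.

Lemma ev2C : ev2 'X%:P = c.
Proof. by rewrite /= map_polyC /horner_eval hornerC; apply: horner_algX. Qed.

Lemma ev2Xn n : ev2 'X^n = l0 ^+ n.
Proof. by rewrite rmorphXn ev2X. Qed.

Lemma D_horner_alg q : D (horner_alg c q) = 0.
Proof.
elim/poly_ind: q => [|q a IH]; first by rewrite rmorph0 D0.
rewrite rmorphD rmorphM /= horner_algX horner_algC D_add D_mul IH Dc.
by rewrite -[a%:A]mulr1 -scalerAl mul1r D_scale D1 scaler0 !mul0r !mulr0 !addr0.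
Qed.

Lemma D_ev2 p : D (ev2 p) = ev2 p^`() * D l0.
Proof.
elim/poly_ind: p => [|p a IH]; first by rewrite deriv0 rmorph0 D0 mul0r.
rewrite derivMXaddC !rmorphD !rmorphM ev2X D_add D_mul IH.
rewrite [ev2 a%:P]/= map_polyC /horner_eval hornerC D_horner_alg; ring.
Qed.

Hypothesis l0_root : 2 * l0 ^+ 3 + t * l0 + c = 0.

Definition Delta : R := 4 * l0 ^+ 3 - c.
Hypothesis Delta_unit : Delta \is a GRing.unit.
Definition w : R := Delta^-1.

Lemma Delta_w : Delta * w = 1.
Proof. exact: mulrV. Qed.

Definition Delta_poly : {poly {poly algC}} := 4%:R * 'X^3 - 'X%:P.

Lemma ev2_Delta_poly : ev2 Delta_poly = Delta.
Proof. by rewrite rmorphB rmorphM rmorph_nat ev2Xn ev2C. Qed.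

Lemma size_natr k : (size (k%:R : {poly {poly algC}}) <= 1)%N.
Proof. by rewrite -polyC_natr size_polyC_leq1. Qed.

Lemma size_Delta_poly : (size Delta_poly <= 4)%N.
Proof.
apply: leq_trans (size_polyD _ _) _; rewrite size_polyN geq_max.
rewrite (leq_trans (size_polyC_leq1 _)) // andbT.
apply: leq_trans (size_polyMleq _ _) _; rewrite size_polyXn.
by have := size_natr 4; case: (size _) => [|[]].
Qed.

(* The coefficient of lambda_k in the recursion is Delta / lambda_0. *)
Lemma linear_coef_l0 : (6 * l0 ^+ 2 + t) * l0 = Delta.
Proof. by apply/eqP; rewrite -subr_eq0 -l0_root /Delta; apply/eqP; ring. Qed.

(* Implicit differentiation of the cubic: d lambda_0/dt = -lambda_0^2/Delta. *)
Lemma D_l0 : D l0 = - (l0 ^+ 2 * w).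
Proof.
have h : D (2 * l0 ^+ 3 + t * l0 + c) = 0 by rewrite l0_root D0.
rewrite !D_add D_natM D_exp D_mul Dt Dc in h.
have hD : D l0 * Delta = - (l0 * l0).
  apply/eqP; rewrite -linear_coef_l0 -subr_eq0 -[0](mulr0 l0) -h; apply/eqP; ring.
by rewrite -[D l0]mulr1 -Delta_w mulrA hD; ring.
Qed.

Lemma D_Delta : D Delta = - (12%:R * l0 ^+ 4 * w).
Proof. by rewrite /Delta DB D_natM D_exp Dc subr0 D_l0; ring. Qed.

Lemma D_w : D w = 12%:R * l0 ^+ 4 * w ^+ 3.
Proof.
have h : D (Delta * w) = 0 by rewrite Delta_w D1.
rewrite D_mul D_Delta in h.
have hD : Delta * D w = 12%:R * l0 ^+ 4 * w ^+ 2.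
  by apply/eqP; rewrite -subr_eq0 -h; apply/eqP; ring.
transitivity (w * (Delta * D w)); last by rewrite hD; ring.
by rewrite mulrA [w * _]mulrC Delta_w mul1r.
Qed.

Lemma D_wexp e : D (w ^+ e) = (12 * e)%:R * l0 ^+ 4 * w ^+ e.+2.
Proof.
elim: e => [|e IH]; first by rewrite expr0 D1 mul0r mul0r.
by rewrite exprS D_mul IH D_w mulnS natrD !exprS; ring.
Qed.

Definition frac_form (e s : nat) (x : R) : Prop :=
  exists p : {poly {poly algC}}, (size p <= s)%N /\ x = ev2 p * w ^+ e.

Lemma frac_form_poly e (p : {poly {poly algC}}) : frac_form e (size p) (ev2 p * w ^+ e).
Proof. by exists p. Qed.

Lemma frac_form_ev2 (p : {poly {poly algC}}) : frac_form 0 (size p) (ev2 p).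
Proof. by exists p; rewrite expr0 mulr1. Qed.

Lemma frac_form0 e s : frac_form e s 0.
Proof. by exists 0; rewrite size_poly0 rmorph0 mul0r. Qed.

Lemma frac_formD e s x y : frac_form e s x -> frac_form e s y -> frac_form e s (x + y).
Proof.
move=> [p [hp ->]] [q [hq ->]]; exists (p + q); rewrite rmorphD mulrDl.
by split=> //; apply: leq_trans (size_polyD _ _) _; rewrite geq_max hp hq.
Qed.

Lemma frac_formN e s x : frac_form e s x -> frac_form e s (- x).
Proof. by move=> [p [hp ->]]; exists (- p); rewrite size_polyN rmorphN mulNr. Qed.

Lemma frac_form_natM k e s x : frac_form e s x -> frac_form e s (k%:R * x).
Proof.
move=> [p [hp ->]]; exists (k%:R * p); rewrite rmorphM rmorph_nat mulrA.
split=> //; apply: leq_trans (size_polyMleq _ _) _; have := size_natr k; lia.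
Qed.

Lemma frac_formM e1 s1 e2 s2 x y : frac_form e1 s1 x -> frac_form e2 s2 y ->
  frac_form (e1 + e2) (s1 + s2).-1 (x * y).
Proof.
move=> [p [hp ->]] [q [hq ->]]; exists (p * q); rewrite rmorphM exprD.
by split; [apply: leq_trans (size_polyMleq _ _) _; lia | ring].
Qed.

Lemma frac_form_sum e s k (F : 'I_k -> R) (P : pred 'I_k) :
  (forall i, P i -> frac_form e s (F i)) -> frac_form e s (\sum_(i < k | P i) F i).
Proof. by move=> h; apply: big_ind; [exact: frac_form0 | exact: frac_formD |]. Qed.

Lemma frac_form_raise e s x : frac_form e s x -> frac_form e.+1 (s + 3) x.
Proof.
move=> [p [hp ->]]; exists (p * Delta_poly); split.
  by apply: leq_trans (size_polyMleq _ _) _; have := size_Delta_poly; lia.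
by rewrite rmorphM ev2_Delta_poly -[LHS]mulr1 -Delta_w exprS; ring.
Qed.

Lemma frac_form_weaken e s e' s' x : frac_form e s x -> (e <= e')%N ->
  (s + 3 * (e' - e) <= s')%N -> frac_form e' s' x.
Proof.
move=> hx /subnK <-; elim: (e' - e)%N s' => [|k IH] s' hs.
  by case: hx => p [hp ->]; exists p; split=> //; lia.
have := frac_form_raise (IH (s' - 3)%N ltac:(lia)).
by case=> p [hp ->]; exists p; split=> //; lia.
Qed.

Lemma frac_form_D_l0 : frac_form 1 3 (D l0).
Proof. by rewrite D_l0; exists (- 'X^2); rewrite size_polyN size_polyXn rmorphN ev2Xn mulNr. Qed.

Lemma frac_form_D e s x : frac_form e s x -> frac_form (e + 2) (s + 4) (D x).
Proof.
case: s => [|s] [p [hp ->]].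
  move: hp; rewrite leqn0 size_poly_eq0 => /eqP->.
  by rewrite rmorph0 mul0r D0; exact: frac_form0.
rewrite D_mul D_ev2 D_wexp mulrAC; apply: frac_formD.
  have hd : frac_form e s (ev2 p^`() * w ^+ e).
    exists p^`(); split=> //.
    have [->|pnz] := eqVneq p 0; first by rewrite deriv0 size_poly0.
    by have := lt_size_deriv pnz; lia.
  by apply: frac_form_weaken (frac_formM hd frac_form_D_l0) _ _; lia.
have hw : frac_form e.+2 5 ((12 * e)%:R * l0 ^+ 4 * w ^+ e.+2).
  rewrite -mulrA -ev2Xn; apply: frac_form_natM.
  by have := frac_form_poly e.+2 ('X^4 : {poly {poly algC}}); rewrite size_polyXn.
by apply: frac_form_weaken (frac_formM (frac_form_ev2 p) hw) _ _; lia.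
Qed.

Definition den_exp (a : nat) : nat := if a is 0 then 0 else (5 * a).-1.
Definition num_size (a : nat) : nat := if a is 0 then 2 else (9 * a).-1.

(* The weights are superadditive enough for the cubic terms of lambda_(2n). *)
Lemma cubic_weights a b g n : (a + b + g = n)%N ->
  (a < n)%N -> (b < n)%N -> (g < n)%N ->
  (den_exp a + den_exp b + den_exp g <= (5 * n).-2)%N /\
  (((num_size a + num_size b).-1 + num_size g).-1
     + 3 * ((5 * n).-2 - (den_exp a + den_exp b + den_exp g)) <= (9 * n).-2)%N.
Proof. by case: a b g => [|a] [|b] [|g] /=; lia. Qed.

Variable lam : nat -> R.
Hypothesis lam0 : lam 0%N = l0.

Definition cubic_sum (k : nat) : R :=
  \sum_(i < k) \sum_(j < k) \sum_(m < k | (i + j + m == k)%N) lam i * lam j * lam m.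

Definition forcing (k : nat) : R := if k is k'.+2 then D (D (lam k')) else 0.

Hypothesis lam_rec : forall k : nat, (0 < k)%N ->
  (6 * l0 ^+ 2 + t) * lam k + 2 * cubic_sum k = forcing k.

Lemma lam_solve k : (0 < k)%N -> lam k = l0 * w * (forcing k - 2 * cubic_sum k).
Proof.
move=> k_gt0; rewrite -(lam_rec k_gt0) addrK.
transitivity ((6 * l0 ^+ 2 + t) * l0 * w * lam k); last by ring.
by rewrite linear_coef_l0 Delta_w mul1r.
Qed.

Definition lam_shape (k : nat) : Prop :=
  if odd k then lam k = 0 else frac_form (den_exp k./2) (num_size k./2) (lam k).

Lemma cubic_term_vanish i j m : odd i || odd j || odd m ->
  lam_shape i -> lam_shape j -> lam_shape m -> lam i * lam j * lam m = 0.
Proof.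
rewrite /lam_shape; case: (odd i) => [_ -> _ _|]; first by rewrite !mul0r.
case: (odd j) => [_ _ -> _|]; first by rewrite mulr0 mul0r.
by case: (odd m) => // _ _ _ ->; rewrite mulr0.
Qed.

Lemma cubic_sum_odd k : odd k -> (forall i, (i < k)%N -> lam_shape i) ->
  cubic_sum k = 0.
Proof.
move=> k_odd shape; apply: big1 => i _; apply: big1 => j _; apply: big1 => m /eqP ijm.
apply: (cubic_term_vanish _ (shape _ (ltn_ord i)) (shape _ (ltn_ord j))
  (shape _ (ltn_ord m))).
have : odd (i + j + m) by rewrite ijm.
by rewrite !oddD; case: (odd i) (odd j) (odd m) => [] [] [].
Qed.

Lemma cubic_sum_even a : (forall i, (i < (a.+1).*2)%N -> lam_shape i) ->
  frac_form (5 * a.+1).-2 (9 * a.+1).-2 (cubic_sum (a.+1).*2).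
Proof.
move=> shape; apply: frac_form_sum => i _; apply: frac_form_sum => j _.
apply: frac_form_sum => m /eqP ijm.
have [some_odd|] := boolP (odd i || odd j || odd m).
  rewrite (cubic_term_vanish some_odd (shape _ (ltn_ord i)) (shape _ (ltn_ord j))
    (shape _ (ltn_ord m))).
  exact: frac_form0.
rewrite !negb_or => /andP[/andP[ei ej] em].
have := shape i (ltn_ord i); have := shape j (ltn_ord j); have := shape m (ltn_ord m).
rewrite /lam_shape (negbTE ei) (negbTE ej) (negbTE em) => hm hj hi.
have := odd_double_half i; have := odd_double_half j; have := odd_double_half m.
rewrite (negbTE ei) (negbTE ej) (negbTE em) !add0n => mE jE iE.
have li := ltn_ord i; have lj := ltn_ord j; have lm := ltn_ord m.
have [he hs] := @cubic_weights i./2 j./2 m./2 a.+1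
  ltac:(lia) ltac:(lia) ltac:(lia) ltac:(lia).
by apply: frac_form_weaken (frac_formM (frac_formM hi hj) hm) he hs.
Qed.

Lemma forcing_odd k : odd k -> (forall i, (i < k)%N -> lam_shape i) -> forcing k = 0.
Proof.
case: k => [|[|k]] //= k_odd shape; have := shape k (ltnW (ltnSn _)).
by rewrite /lam_shape negbK in k_odd *; rewrite k_odd => ->; rewrite !D0.
Qed.

Lemma forcing_even a : lam_shape a.*2 ->
  frac_form (5 * a.+1).-2 (9 * a.+1).-2 (forcing (a.+1).*2).
Proof.
rewrite /lam_shape odd_double doubleK /forcing doubleS => shape.
case: a shape => [_|a shape].
  by rewrite lam0; apply: frac_form_weaken (frac_form_D frac_form_D_l0) _ _; lia.
by apply: frac_form_weaken (frac_form_D (frac_form_D shape)) _ _; rewrite /=; lia.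
Qed.

Lemma lam_shape_step k : (forall i, (i < k)%N -> lam_shape i) -> lam_shape k.
Proof.
move=> shape; case: (posnP k) => [->|k_gt0].
  by rewrite /lam_shape /= lam0 -ev2X; have := frac_form_ev2 'X; rewrite size_polyX.
rewrite /lam_shape (lam_solve k_gt0); case: ifP => k_odd.
  by rewrite forcing_odd ?cubic_sum_odd // mulr0 subr0 mulr0.
have [a kE] : exists a, k = (a.+1).*2.
  exists k./2.-1; rewrite -[LHS]odd_double_half k_odd add0n; lia.
rewrite kE doubleK in shape *.
have hl0w : frac_form 1 2 (l0 * w).
  by rewrite -ev2X -[w]expr1; have := frac_form_poly 1 'X; rewrite size_polyX.
have hforcing := forcing_even (shape _ (ltn_trans (ltnSn _) (ltnSn _))).
have hcubic := frac_formN (frac_form_natM 2 (cubic_sum_even shape)).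
by apply: frac_form_weaken (frac_formM hl0w (frac_formD hforcing hcubic)) _ _;
  rewrite /den_exp /num_size; lia.
Qed.

Lemma lam_shape_all k : lam_shape k.
Proof. by elim/ltn_ind: k => k; exact: lam_shape_step. Qed.

End ZeroParameterSolution.

Theorem mainTheorem3
  (R : comUnitAlgType algC) (D : R -> R)
  (hDadd : forall x y : R, D (x + y) = D x + D y)
  (hDscale : forall (a : algC) (x : R), D (a *: x) = a *: D x)
  (hDmul : forall x y : R, D (x * y) = D x * y + x * D y)
  (t c l0 : R)
  (hDt : D t = 1) (hDc : D c = 0)
  (hl0 : 2 * l0 ^+ 3 + t * l0 + c = 0)
  (hl0u : l0 \is a GRing.unit)
  (hdenu : 4 * l0 ^+ 3 - c \is a GRing.unit)
  (lam : nat -> R)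
  (hlam0 : lam 0%N = l0)
  (hlamrec : forall k : nat, (0 < k)%N ->
     (6 * l0 ^+ 2 + t) * lam k
       + 2 * (\sum_(i < k) \sum_(j < k) \sum_(m < k | (i + j + m == k)%N)
                lam i * lam j * lam m)
     = (if k is k'.+2 then D (D (lam k')) else 0)) :
  forall n : nat, (0 < n)%N ->
    lam (2 * n).-1 = 0 /\
    exists p : {poly {poly algC}},
      (size p <= (9 * n).-1)%N /\
      lam (2 * n)%N = eval2 p l0 c / (4 * l0 ^+ 3 - c) ^+ (5 * n).-1.
Proof.
move=> n n_gt0.
have shape := lam_shape_all hDadd hDmul hDscale hDt hDc hl0 hdenu hlam0 hlamrec.
split.
  have := shape (2 * n).-1; rewrite /lam_shape.
  by case: n n_gt0 => // n _; rewrite mulnS /= add0n mul2n odd_double.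
have := shape (2 * n)%N; rewrite /lam_shape mul2n odd_double doubleK.
case: n n_gt0 => // n _ [p [hp ->]]; exists p; split => //.
by rewrite eval2_ev2 /w exprVn.
Qed.
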